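(* Let $V$ be a vector space over a field $F$ and $T:V\to V$ a (not necessarily linear) bijection. If $p(x)=\sum_{i=0}^m a_ix^i$ with $a_m\neq0$ is a vanishing polynomial of $T$, then the reciprocal polynomial $p^*(x)=\sum_{i=0}^m a_ix^{m-i}$ is a vanishing polynomial of $T^{-1}$. If $p_m$ is the minimal polynomial of $T$, then $p_m(0)\neq0$ and $p_m(0)^{-1}p_m^*$ is the minimal polynomial of $T^{-1}$.
   Context: For $T:V\to V$ (not necessarily linear), $T^0=I$, $T^i=T\circ T^{i-1}$, and $p(T)(v)=\sum a_iT^i(v)$ for $p(x)=\sum a_ix^i$. A vanishing polynomial of $T$ is a nonzero $p\in F[x]$ with $p(T)(v)=0$ for all $v\in V$; the minimal polynomial is the unique monic vanishing polynomial of least degree. *)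

From HB Require Import structures.
From mathcomp Require Import all_boot all_order all_algebra.
Set Implicit Arguments. Unset Strict Implicit. Unset Printing Implicit Defensive.
Import GRing.Theory.
Local Open Scope ring_scope.

Definition poly_app (F : fieldType) (V : lmodType F) (p : {poly F})
    (T : V -> V) (v : V) : V :=
  \sum_(i < size p) p`_i *: iter i T v.

Definition vanishing (F : fieldType) (V : lmodType F) (p : {poly F})
    (T : V -> V) : Prop :=
  p != 0 /\ forall v : V, poly_app p T v = 0.

Definition minimal_poly (F : fieldType) (V : lmodType F) (p : {poly F})
    (T : V -> V) : Prop :=
  [/\ p \is monic, vanishing p T &
      forall q : {poly F}, q \is monic -> vanishing q T -> (size p <= size q)%N].

Definition recip (F : fieldType) (p : {poly F}) : {poly F} :=
  \poly_(i < size p) p`_((size p).-1 - i).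

(* Reindexing i |-> m - i turns p^*(T^-1) v into p(T) applied to T^-m v, which
   vanishes; so p^* vanishes on T^-1, and symmetrically q^* vanishes on T when q
   vanishes on T^-1. As deg p^* <= deg p, the minimal degrees for T and T^-1
   agree. If p_m(0) = 0, then p_m = x q and q(T) = p_m(T) T^-1 = 0 (here
   surjectivity of T is used), contradicting minimality; hence p_m^* has degree
   deg p_m and leading coefficient p_m(0). *)
From HB Require Import structures.
From mathcomp Require Import all_boot all_order all_algebra.
Import GRing.Theory.
Local Open Scope ring_scope.

Section PolyApp.

Context {F : fieldType} {V : lmodType F} {T : V -> V}.

Lemma poly_app_widen (p : {poly F}) (v : V) {n} : (size p <= n)%N ->
  poly_app p T v = \sum_(i < n) p`_i *: iter i T v.
Proof.
move=> le_p_n; rewrite /poly_app (big_ord_widen _ (fun i => p`_i *: iter i T v) le_p_n).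
rewrite big_mkcond /=; apply: eq_bigr => i _; case: ifP => // /negbT.
by rewrite -leqNgt => le_p_i; rewrite nth_default // scale0r.
Qed.

Lemma poly_appZ (c : F) (p : {poly F}) (v : V) :
  poly_app (c *: p) T v = c *: poly_app p T v.
Proof.
rewrite (poly_app_widen _ _ (size_scale_leq c p)) /poly_app scaler_sumr.
by apply: eq_bigr => i _; rewrite coefZ scalerA.
Qed.

Lemma vanishingZ (c : F) (p : {poly F}) :
  c != 0 -> vanishing p T -> vanishing (c *: p) T.
Proof.
move=> c_neq0 [p_neq0 p_van]; split; first by rewrite scaler_eq0 negb_or c_neq0.
by move=> v; rewrite poly_appZ p_van scaler0.
Qed.

Lemma minimal_poly_size_leq {p q : {poly F}} :
  minimal_poly p T -> vanishing q T -> (size p <= size q)%N.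
Proof.
move=> [_ _ p_min] q_van; have q_neq0 := q_van.1.
have lc_neq0 : (lead_coef q)^-1 != 0 by rewrite invr_eq0 lead_coef_eq0.
rewrite -(size_scale q lc_neq0); apply: p_min; last exact: vanishingZ.
by rewrite monicE lead_coefZ mulVf // lead_coef_eq0.
Qed.

End PolyApp.

Section Reciprocal.

Context {F : fieldType}.
Implicit Types p : {poly F}.

Lemma size_recip_leq p : (size (recip p) <= size p)%N.
Proof. exact: size_poly. Qed.

Lemma coef0_recip p : (recip p)`_0 = lead_coef p.
Proof.
rewrite /recip coef_poly subn0 size_poly_gt0.
by have [->|] := eqVneq p 0; rewrite ?lead_coef0.
Qed.

Lemma recip_eq0 p : (recip p == 0) = (p == 0).
Proof.
apply/eqP/eqP => [/(congr1 (fun q : {poly F} => q`_0))|->].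
  by rewrite coef0_recip coef0 => /eqP; rewrite lead_coef_eq0 => /eqP.
by apply/eqP; rewrite -size_poly_eq0 -leqn0 -(size_poly0 F) size_recip_leq.
Qed.

Lemma size_recip p : p.[0] != 0 -> size (recip p) = size p.
Proof. by move=> p0_neq0; rewrite /recip size_poly_eq // subnn -horner_coef0. Qed.

Lemma lead_coef_recip p : p.[0] != 0 -> lead_coef (recip p) = p.[0].
Proof.
move=> p0_neq0; have p_neq0 : p != 0 by apply: contraNneq p0_neq0 => ->; rewrite horner0.
rewrite /lead_coef size_recip // /recip coef_poly ltn_predL size_poly_gt0 p_neq0.
by rewrite subnn horner_coef0.
Qed.

End Reciprocal.

Lemma iter_cancel_addn (A : Type) (f g : A -> A) : cancel g f ->
  forall j k x, iter j f (iter (k + j) g x) = iter k g x.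
Proof.
move=> gK; elim=> [|j IH] k x; first by rewrite addn0.
by rewrite iterS addnS -addSn IH iterS gK.
Qed.

Section Inverse.

Context {F : fieldType} {V : lmodType F} {T Tinv : V -> V}.
Hypothesis TinvK : cancel Tinv T.

Lemma poly_app_recip (p : {poly F}) (v : V) :
  poly_app (recip p) Tinv v = poly_app p T (iter (size p).-1 Tinv v).
Proof.
rewrite (poly_app_widen _ _ (size_recip_leq p)) /poly_app /recip.
case: (size p) => [|m]; first by rewrite !big_ord0.
rewrite (reindex_inj rev_ord_inj) /=; apply: eq_bigr => i _.
have le_i_m : (i <= m)%N by rewrite -ltnS.
rewrite coef_poly subSS ltnS leq_subr subKn //; congr (_ *: _).
have -> : iter m Tinv v = iter (m - i + i) Tinv v by rewrite subnK.
by rewrite iter_cancel_addn.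
Qed.

Lemma recip_vanishing (p : {poly F}) : vanishing p T -> vanishing (recip p) Tinv.
Proof.
move=> [p_neq0 p_van]; split; first by rewrite recip_eq0.
by move=> v; rewrite poly_app_recip p_van.
Qed.

Lemma poly_app_Tinv (p : {poly F}) (v : V) :
  poly_app p T (Tinv v) = p`_0 *: Tinv v + poly_app (drop_poly 1 p) T v.
Proof.
rewrite (poly_app_widen _ _ (leqnSn (size p))) big_ord_recl /=.
rewrite (poly_app_widen _ _ (_ : size (drop_poly 1 p) <= size p)%N); last first.
  by rewrite size_drop_poly leq_subr.
congr (_ + _); apply: eq_bigr => i _.
by rewrite coef_drop_poly addn1 /= -iterS iterSr TinvK.
Qed.

Lemma minimal_poly_coef0_neq0 {p : {poly F}} : minimal_poly p T -> p.[0] != 0.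
Proof.
move=> p_min; case: (p_min) => p_monic [_ p_van] _.
apply/negP; rewrite horner_coef0 => /eqP p0_eq0.
have size_p_gt1 : (1 < size p)%N.
  rewrite ltnNge; apply/negP => /size1_polyC p_const.
  by move: p_monic; rewrite monicE p_const lead_coefC p0_eq0 eq_sym oner_eq0.
have q_van : vanishing (drop_poly 1 p) T.
  split; first by rewrite -size_poly_eq0 size_drop_poly subn_eq0 -ltnNge.
  by move=> v; rewrite -[RHS](p_van (Tinv v)) poly_app_Tinv p0_eq0 scale0r add0r.
have := minimal_poly_size_leq p_min q_van.
by rewrite size_drop_poly leqNgt ltn_subrL (ltn_trans _ size_p_gt1).
Qed.

End Inverse.

Lemma minimal_poly_recip (F : fieldType) (V : lmodType F) (T Tinv : V -> V) :
  cancel T Tinv -> cancel Tinv T -> forall p : {poly F},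
  minimal_poly p T -> minimal_poly ((p.[0])^-1 *: recip p) Tinv.
Proof.
move=> TK TinvK p p_min; have p0_neq0 := minimal_poly_coef0_neq0 TinvK p_min.
case: (p_min) => _ p_van _.
have inv_neq0 : (p.[0])^-1 != 0 by rewrite invr_eq0.
split.
- by rewrite monicE lead_coefZ lead_coef_recip // mulVf.
- exact/vanishingZ/(recip_vanishing TinvK).
- move=> q _ q_van; rewrite size_scale // size_recip //.
  apply: leq_trans (size_recip_leq q).
  exact/(minimal_poly_size_leq p_min)/(recip_vanishing TK).
Qed.

Theorem mainTheorem16 (F : fieldType) (V : lmodType F) (T Tinv : V -> V)
    (hTK : cancel T Tinv) (hTinvK : cancel Tinv T) :
  (forall p : {poly F}, vanishing p T -> vanishing (recip p) Tinv) /\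
  (forall pm : {poly F}, minimal_poly pm T ->
     pm.[0] != 0 /\ minimal_poly ((pm.[0])^-1 *: recip pm) Tinv).
Proof.
split; first exact: recip_vanishing.
move=> pm pm_min; split; first exact: (minimal_poly_coef0_neq0 hTinvK pm_min).
exact: minimal_poly_recip.
Qed.
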